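(* Fix $p\ge 1$, $\beta^*\in\mathbb{R}^p$ with support $S^*=\{j:\beta^*_j\neq 0\}$, and $\sigma^2>0$. Then $\mathsf{R}_{\mathtt{oos}}(\beta^*;\mathcal{U}_{\beta^*,\sigma^2})=\sigma^2$, and for every $\beta\in\mathbb{R}^p$, $$\sigma^2\|\beta-\beta^*\|_2^2\;\le\;\mathsf{R}_{\mathtt{oos}}(\beta;\mathcal{U}_{\beta^*,\sigma^2})-\mathsf{R}_{\mathtt{oos}}(\beta^*;\mathcal{U}_{\beta^*,\sigma^2})\;\le\;\sigma^2p^2\|\beta-\beta^*\|_2^2+2\sigma^2p\,\|\beta_{[p]\setminus S^*}\|_2 .$$
   Context: For $S\subseteq[p]$ and $x\in\mathbb{R}^p$, $x_S$ is the subvector of coordinates in $S$. $\mathcal{U}_{\beta^*,\sigma^2}$ is the set of probability distributions $\mu$ of $(x,y)\in\mathbb{R}^p\times\mathbb{R}$ such that $\mathbb{E}_\mu[y\mid x_{S^*}]=(\beta^*_{S^*})^\top x_{S^*}$ and $\mathrm{Var}_\mu[y\mid x_{S^*}]\le\sigma^2$ for $\mu$-a.e. $x$, and $\mathbb{E}_\mu[x_j^2]\le\sigma^2$ for all $j\in[p]$. The out-of-sample risk is $\mathsf{R}_{\mathtt{oos}}(\beta;\mathcal{U}_{\beta^*,\sigma^2})=\sup_{\mu\in\mathcal{U}_{\beta^*,\sigma^2}}\mathbb{E}_{(x,y)\sim\mu}[|y-\beta^\top x|^2]$. *)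

From HB Require Import structures.
From mathcomp Require Import all_boot all_order all_algebra.
From mathcomp Require Import all_classical all_reals all_analysis.
Set Implicit Arguments. Unset Strict Implicit. Unset Printing Implicit Defensive.
Import Order.TTheory GRing.Theory Num.Theory.
Local Open Scope classical_set_scope.
Local Open Scope ring_scope.

Definition supp {R : realType} {p : nat} (bs : 'rV[R]_p) : set 'I_p :=
  [set j | bs 0 j != 0].

Definition sigma_xS {R : realType} {d} {T : measurableType d} {p : nat}
  (S : set 'I_p) (X : 'I_p -> T -> R) : set (set T) :=
  <<s [set A | exists j B, S j /\ measurable B /\ A = X j @^-1` B] >>.

Definition linpred {R : realType} {T : Type} {p : nat}
  (b : 'rV[R]_p) (X : 'I_p -> T -> R) (w : T) : R :=
  \sum_(j < p) b 0 j * X j w.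

(* The law of (x, y) in U_{beta*, sigma^2}, for (x, y) = ((X j)_j, Y) a random
   vector on a probability space (T, P):
   - E[y | x_{S*}] = beta*_{S*}^T x_{S*}  (defining property of conditional
     expectation: y integrable and E[(y - beta*^T x) 1_A] = 0 for all
     A in sigma(x_{S*}); note beta*^T x = beta*_{S*}^T x_{S*});
   - Var[y | x_{S*}] = E[(y - E[y|x_{S*}])^2 | x_{S*}] <= sigma^2 a.s.
     (i.e. E[(y - beta*^T x)^2 1_A] <= sigma^2 P(A) for all A in sigma(x_{S*}));
   - E[x_j^2] <= sigma^2 for all j. *)
Definition in_U {R : realType} {d} {T : measurableType d} {p : nat}
  (bs : 'rV[R]_p) (sigma2 : R) (P : probability T R)
  (X : 'I_p -> T -> R) (Y : T -> R) : Prop :=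
  [/\ (forall j, measurable_fun setT (X j)) /\ measurable_fun setT Y,
      P.-integrable setT (fun w => (Y w)%:E),
      (forall A, sigma_xS (supp bs) X A ->
          (\int[P]_(w in A) (Y w - linpred bs X w)%:E = 0)%E),
      (forall A, sigma_xS (supp bs) X A ->
          (\int[P]_(w in A) ((Y w - linpred bs X w) ^+ 2)%:E
             <= sigma2%:E * P A)%E) &
      (forall j, (\int[P]_w ((X j w) ^+ 2)%:E <= sigma2%:E)%E)].

Definition R_oos {R : realType} {p : nat} (b bs : 'rV[R]_p) (sigma2 : R) : \bar R :=
  ereal_sup [set r : \bar R | exists (d : measure_display) (T : measurableType d)
     (P : probability T R) (X : 'I_p -> T -> R) (Y : T -> R),
     in_U bs sigma2 P X Y /\
     r = (\int[P]_w ((Y w - linpred b X w) ^+ 2)%:E)%E].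

Definition sqnorm {R : realType} {p : nat} (v : 'rV[R]_p) : R :=
  \sum_(j < p) v 0 j ^+ 2.

Definition off_support_norm {R : realType} {p : nat} (b bs : 'rV[R]_p) : R :=
  Num.sqrt (\sum_(j < p | bs 0 j == 0) b 0 j ^+ 2).

From HB Require Import structures.
From mathcomp Require Import all_boot all_order all_algebra.
From mathcomp Require Import all_classical all_reals all_analysis.
From mathcomp Require Import measurable_realfun ring lra.
Set Implicit Arguments. Unset Strict Implicit. Unset Printing Implicit Defensive.
Import Order.TTheory GRing.Theory Num.Theory Num.Def.
Import numFieldTopology.Exports.
Import HBSimple HBNNSimple.
Local Open Scope ring_scope.
Local Open Scope classical_set_scope.

(* For a law in U put e = y - bs^T x and D = (b - bs)^T x, so
   that y - b^T x = e - D and E[(e - D)^2] = E[e^2] - 2 E[e D] + E[D^2].  Here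
   E[e^2] <= sigma^2; by Cauchy-Schwarz E[D^2] <= p sum_j (b_j - bs_j)^2 sigma^2;
   for j in S* the conditional-mean condition gives E[e x_j] = 0, which needs
   extending the orthogonality of e to all events {x_j in B} to the variable
   x_j itself (simple-function approximation plus dominated convergence); for
   j off S* one has |2 b_j e x_j| <= |b_j| (e^2 + x_j^2).

   The two-point law with deterministic x_j = sigma sign(b_j -
   bs_j) and y = bs^T x +- sigma (fair coin) lies in U and has square loss
   sigma^2 + sigma^2 (sum_j |b_j - bs_j|)^2 >= sigma^2 + sigma^2 ||b - bs||^2.

   Taking b = bs in both bounds gives R_oos(bs) = sigma^2, and the theorem
   follows by subtraction. *)

Lemma sqr_sum_le (R : realFieldType) (n : nat) (a : 'I_n -> R) :
  (\sum_(i < n) a i) ^+ 2 <= n%:R * \sum_(i < n) a i ^+ 2.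
Proof.
have -> : (\sum_(i < n) a i) ^+ 2 = \sum_(i < n) \sum_(j < n) a i * a j.
  by rewrite expr2 big_distrl; apply: eq_bigr => i _; rewrite big_distrr.
apply: (le_trans (y := \sum_(i < n) \sum_(j < n) ((a i ^+ 2 + a j ^+ 2) / 2))).
  apply: ler_sum => i _; apply: ler_sum => j _.
  by have := sqr_ge0 (a i - a j); nra.
have sum_i : \sum_(i < n) \sum_(j < n) a i ^+ 2 = n%:R * \sum_(i < n) a i ^+ 2.
  by rewrite big_distrr; apply: eq_bigr => i _; rewrite sumr_const card_ord /= mulr_natl.
have sum_j : \sum_(i < n) \sum_(j < n) a j ^+ 2 = n%:R * \sum_(i < n) a i ^+ 2.
  by rewrite exchange_big.
have -> : \sum_(i < n) \sum_(j < n) ((a i ^+ 2 + a j ^+ 2) / 2) =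
    (\sum_(i < n) \sum_(j < n) a i ^+ 2 + \sum_(i < n) \sum_(j < n) a j ^+ 2) / 2.
  rewrite mulrDl !mulr_suml -big_split /=; apply: eq_bigr => i _.
  by rewrite !mulr_suml -big_split /=; apply: eq_bigr => j _; rewrite mulrDl.
rewrite sum_i sum_j; lra.
Qed.

Lemma sum_sqr_le_sqr_sum (R : realFieldType) (n : nat) (u : 'I_n -> R) :
  (forall i, 0 <= u i) -> \sum_(i < n) u i ^+ 2 <= (\sum_(i < n) u i) ^+ 2.
Proof.
move=> u_ge0.
suff [] : \sum_(i < n) u i ^+ 2 <= (\sum_(i < n) u i) ^+ 2 /\ 0 <= \sum_(i < n) u i by [].
apply: (big_rec2 (fun x y => x <= y ^+ 2 /\ 0 <= y)) => // i x y _ [xy y_ge0].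
by split; [have := u_ge0 i; nra | exact: addr_ge0].
Qed.

(* |b_j| off the support of bs, 0 on it: the coordinates where the
   orthogonality E[e x_j] = 0 is not available. *)
Definition off_weight {R : realFieldType} {p : nat} (b bs : 'rV[R]_p) (j : 'I_p)
  : R := if bs 0 j == 0 then `|b 0 j| else 0.

Lemma off_weight_ge0 {R : realFieldType} {p : nat} (b bs : 'rV[R]_p) j :
  0 <= off_weight b bs j.
Proof. by rewrite /off_weight; case: ifP. Qed.

(* Pointwise form of the upper bound: with e = y - bs^T x, the square loss of
   b, corrected by the cross terms 2 (b_j - bs_j) e x_j over the support of
   bs (which have mean zero), is dominated by an expression in the second
   moments e^2 and x_j^2 only. *)
Lemma sq_loss_pointwise (R : realFieldType) (p : nat) (b bs : 'rV[R]_p)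
    (e : R) (x : 'I_p -> R) :
  (e - \sum_(j < p) (b 0 j - bs 0 j) * x j) ^+ 2
    + \sum_(j < p | bs 0 j != 0) 2 * (b 0 j - bs 0 j) * (e * x j)
  <= e ^+ 2 + \sum_(j < p) (off_weight b bs j * (e ^+ 2 + x j ^+ 2)
                            + p%:R * (b 0 j - bs 0 j) ^+ 2 * x j ^+ 2).
Proof.
set D := \sum_(j < p) _.
have cross : 2 * e * D = \sum_(j < p | bs 0 j != 0) 2 * (b 0 j - bs 0 j) * (e * x j)
    + \sum_(j < p | bs 0 j == 0) 2 * b 0 j * (e * x j).
  rewrite /D mulr_sumr (bigID (fun j => bs 0 j == 0)) /= addrC.
  congr (_ + _); apply: eq_bigr => j; last by move/eqP ->; rewrite subr0; ring.
  by move=> _; ring.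
have off_cross : - \sum_(j < p | bs 0 j == 0) 2 * b 0 j * (e * x j)
    <= \sum_(j < p) off_weight b bs j * (e ^+ 2 + x j ^+ 2).
  rewrite -sumrN [X in _ <= X](bigID (fun j => bs 0 j == 0)) /=.
  rewrite [X in _ + X]big1 ?addr0 => [|j /negbTE]; last first.
    by rewrite /off_weight => ->; rewrite mul0r.
  apply: ler_sum => j bj; rewrite /off_weight bj.
  have := sqr_ge0 (e + x j); have := sqr_ge0 (e - x j).
  by have [b0|b0] := ler0P (b 0 j); nra.
have DD : D ^+ 2 <= \sum_(j < p) p%:R * (b 0 j - bs 0 j) ^+ 2 * x j ^+ 2.
  apply: le_trans (sqr_sum_le _) _; rewrite mulr_sumr.
  by apply/ler_sum => j _; rewrite exprMn mulrA.
rewrite big_split /=; lra.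
Qed.

Lemma sum_off_weight_le {R : realType} {p : nat} (b bs : 'rV[R]_p) :
  \sum_(j < p) off_weight b bs j <= p%:R * off_support_norm b bs.
Proof.
have weight_le j : off_weight b bs j <= off_support_norm b bs.
  rewrite /off_weight /off_support_norm; case: ifPn => [bsj|_]; last exact: sqrtr_ge0.
  rewrite -sqrtr_sqr; apply: ler_wsqrtr.
  by rewrite (bigD1 j) //= lerDl; apply: sumr_ge0 => k _; exact: sqr_ge0.
apply: le_trans (ler_sum _ (fun j _ => weight_le j)) _.
by rewrite sumr_const card_ord mulr_natl.
Qed.

Lemma sqnorm_ge0 {R : realType} {p : nat} (v : 'rV[R]_p) : 0 <= sqnorm v.
Proof. by apply: sumr_ge0 => j _; exact: sqr_ge0. Qed.

Lemma sqnorm_subrr {R : realType} {p : nat} (v : 'rV[R]_p) : sqnorm (v - v) = 0.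
Proof. by rewrite subrr /sqnorm big1 // => j _; rewrite mxE expr0n. Qed.

Lemma off_support_norm_self {R : realType} {p : nat} (bs : 'rV[R]_p) :
  off_support_norm bs bs = 0.
Proof. by rewrite /off_support_norm big1 ?sqrtr0 // => j /eqP ->; rewrite expr0n. Qed.

(* The identity of R is the pointwise limit of simple functions dominated by
   |r|: approximate its positive and negative parts from below. *)
Lemma sfun_approx_id (R : realType) : exists phi : {sfun R >-> R}^nat,
  (forall r, (fun n => phi n r) @ \oo --> r) /\ (forall n r, `|phi n r| <= `|r|).
Proof.
pose pos (r : R) : \bar R := (maxr r 0)%:E.
pose neg (r : R) : \bar R := (maxr (- r) 0)%:E.
have mpos : measurable_fun setT pos by apply/measurable_EFinP/measurable_maxr.
have mneg : measurable_fun setT neg by apply/measurable_EFinP/measurable_maxr.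
have pos0 r : setT r -> (0 <= pos r)%E by rewrite lee_fin le_max lexx orbT.
have neg0 r : setT r -> (0 <= neg r)%E by rewrite lee_fin le_max lexx orbT.
pose ph := nnsfun_approx measurableT mpos; pose ps := nnsfun_approx measurableT mneg.
have phle n r : ph n r <= maxr r 0.
  by rewrite -lee_fin /ph nnsfun_approxE; exact: (le_approx n pos0).
have psle n r : ps n r <= maxr (- r) 0.
  by rewrite -lee_fin /ps nnsfun_approxE; exact: (le_approx n neg0).
have posneg (r : R) : maxr r 0 - maxr (- r) 0 = r /\ maxr r 0 + maxr (- r) 0 = `|r|.
  by have [r0|r0] := ger0P r; rewrite /Order.max; do 2 case: ltP; split; lra.
exists (fun n => (ph n : {sfun R >-> R}) - (ps n : {sfun R >-> R})); split => [r|n r].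
  rewrite -[X in _ --> X](proj1 (posneg r)); apply: cvgB.
    exact: fine_cvg (cvg_nnsfun_approx measurableT mpos pos0 (I : setT r)).
  exact: fine_cvg (cvg_nnsfun_approx measurableT mneg neg0 (I : setT r)).
rewrite sfunB /= (le_trans (ler_normB _ _)) //.
rewrite (ger0_norm (fun_ge0 _)) (ger0_norm (fun_ge0 _)).
by apply: le_trans (lerD (phle n r) (psle n r)) _; rewrite (proj2 (posneg r)).
Qed.

(* Let e have E[e 1{x in B}] = 0 for every Borel set B; then E[e x] = 0 as
   soon as e x is integrable.  This is how the conditional-mean condition of U
   is applied to the coordinates x_j, j in S*. *)
Section orthogonality.
Context d (T : measurableType d) (R : realType) (P : probability T R).
Variables (e x : T -> R).
Hypotheses (me : measurable_fun setT e) (mx : measurable_fun setT x).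
Hypothesis ie : P.-integrable setT (EFin \o e).
Hypothesis e_orth : forall B, measurable B ->
  (\int[P]_(w in x @^-1` B) (e w)%:E = 0)%E.

Lemma integral_mul_indic_comp (A : set R) :
  (\int[P]_w (e w * \1_A (x w))%:E = \int[P]_(w in x @^-1` A) (e w)%:E)%E.
Proof.
rewrite [RHS]integral_mkcond; apply: eq_integral => w _.
rewrite /restrict indicE; case: ifPn => /=.
  by rewrite inE => Ax; rewrite mem_set // mulr1.
by rewrite notin_setE => nA; rewrite memNset // mulr0.
Qed.

Lemma integrable_mul_bounded (g : T -> R) (M : R) :
  measurable_fun setT g -> (forall w, `|g w| <= M) ->
  P.-integrable setT (fun w => (e w * g w)%:E).
Proof.
move=> mg gM; have M0 : 0 <= M by apply: le_trans (gM point) ; exact: normr_ge0.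
apply: le_integrable (integrableZl measurableT M ie) => //.
  by apply/measurable_EFinP; exact: measurable_funM.
move=> w _ /=; rewrite lee_fin !normrM (ger0_norm M0) mulrC.
by rewrite ler_wpM2r.
Qed.

Lemma integral_mul_sfun_eq0 (phi : {sfun R >-> R}) :
  (\int[P]_w (e w * phi (x w))%:E = 0)%E.
Proof.
have mphi y : measurable_fun setT (fun w => \1_(phi @^-1` [set y]) (x w) : R).
  by apply: measurableT_comp => //; exact: measurable_indic.
have iphi y : P.-integrable setT (fun w => (e w * \1_(phi @^-1` [set y]) (x w))%:E).
  apply: (@integrable_mul_bounded _ 1) => // w.
  by rewrite indicE; case: (_ \in _); rewrite ?normr1 ?normr0.
have -> : (fun w => (e w * phi (x w))%:E) = (fun w =>
    \sum_(y <- finmap.enum_fset (fset_set (range phi)))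
       (y%:E * (e w * \1_(phi @^-1` [set y]) (x w))%:E))%E.
  apply/funext => w; rewrite sumEFin; congr EFin.
  rewrite fimfunE fsbig_finite ?fimfunP // big_distrr /=.
  by apply: eq_bigr => y _; rewrite mulrCA.
rewrite integral_sum // => [|y]; last exact: integrableZl.
apply: big1 => y _.
by rewrite integralZl // integral_mul_indic_comp e_orth ?mule0.
Qed.

(* Passing to the limit by dominated convergence (dominating function
   |e x|) gives E[e x] = 0. *)
Lemma integral_mul_eq0 : P.-integrable setT (fun w => (e w * x w)%:E) ->
  (\int[P]_w (e w * x w)%:E = 0)%E.
Proof.
move=> iex; have [phi [phi_cvg phi_le]] := sfun_approx_id R.
pose f_ n w := (e w * phi n (x w))%:E.
have mf_ n : measurable_fun setT (f_ n).
  by apply/measurable_EFinP/measurable_funM => //; exact: measurableT_comp.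
have mf : measurable_fun setT (fun w => (e w * x w)%:E).
  exact/measurable_EFinP/measurable_funM.
have f_cvg : {ae P, forall w, setT w -> f_ ^~ w @ \oo --> (e w * x w)%:E}.
  apply: aeW => w _; apply: cvg_EFin; first exact: nearW.
  exact: cvgMr.
have f_dom : {ae P, forall w n, setT w ->
    (`|f_ n w| <= (abse \o (fun w => (e w * x w)%:E)) w)%E}.
  by apply: aeW => w n _ /=; rewrite lee_fin !normrM ler_wpM2l.
have [_ _] := dominated_convergence measurableT mf_ mf f_cvg
  (integrable_abse iex) f_dom.
under eq_fun do rewrite integral_mul_sfun_eq0.
by move/(cvg_lim (@ereal_hausdorff R)); rewrite lim_cst.
Qed.

End orthogonality.

(* Square-integrable random variables: f^2 integrable controls f and the
   products f g (via |f| <= 1 + f^2 and |f g| <= f^2 + g^2). *)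
Section square_integrable.
Context d (T : measurableType d) (R : realType) (P : probability T R).
Implicit Types f g : T -> R.

Lemma integrable_sq f : measurable_fun setT f ->
  (\int[P]_w (f w ^+ 2)%:E < +oo)%E -> P.-integrable setT (fun w => (f w ^+ 2)%:E).
Proof.
move=> mf f2_fin; apply/integrableP; split; first exact/measurable_EFinP/measurable_funX.
under eq_integral do rewrite abse_EFin ger0_norm ?sqr_ge0 //.
exact: f2_fin.
Qed.

Lemma integrable_of_sq f : measurable_fun setT f ->
  P.-integrable setT (fun w => (f w ^+ 2)%:E) -> P.-integrable setT (EFin \o f).
Proof.
move=> mf if2.
have i1f2 : P.-integrable setT (fun w => (1%:E + (f w ^+ 2)%:E)%E).
  exact: integrableD (finite_measure_integrable_cst _ _ _) if2.
apply: le_integrable i1f2 => //; first exact/measurable_EFinP.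
move=> w _ /=; rewrite lee_fin [X in _ <= X]ger0_norm ?addr_ge0 ?sqr_ge0 //.
by have [f0|f0] := ler0P (f w); nra.
Qed.

Lemma integrable_mul_of_sq f g : measurable_fun setT f -> measurable_fun setT g ->
  P.-integrable setT (fun w => (f w ^+ 2)%:E) ->
  P.-integrable setT (fun w => (g w ^+ 2)%:E) ->
  P.-integrable setT (fun w => (f w * g w)%:E).
Proof.
move=> mf mg if2 ig2; have ifg2 := integrableD measurableT if2 ig2.
apply: le_integrable ifg2 => //; first exact/measurable_EFinP/measurable_funM.
move=> w _ /=; rewrite lee_fin [X in _ <= X]ger0_norm ?addr_ge0 ?sqr_ge0 // normrM.
rewrite -[f w ^+ 2]real_normK ?num_real // -[g w ^+ 2]real_normK ?num_real //.
by have := sqr_ge0 (`|f w| - `|g w|); nra.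
Qed.

End square_integrable.

Lemma sigma_xS_setT {R : realType} {d} {T : measurableType d} {p : nat}
  (S : set 'I_p) (X : 'I_p -> T -> R) : sigma_xS S X setT.
Proof.
have [sxS0 sxSC _] := smallest_sigma_algebra setT
  [set A | exists j B, S j /\ measurable B /\ A = X j @^-1` B].
by have := sxSC set0 sxS0; rewrite setD0.
Qed.
Arguments sigma_xS_setT {R d T p} S X.

Lemma sigma_xS_cst {R : realType} {d} {T : measurableType d} {p : nat}
  (S : set 'I_p) (X : 'I_p -> T -> R) (c : 'I_p -> R) :
  (forall j w, X j w = c j) ->
  forall A, sigma_xS S X A -> A = set0 \/ A = setT.
Proof.
move=> Xc A sxSA.
suff : [set A : set T | A = set0 \/ A = setT] A by [].
apply: (smallest_sub _ _ sxSA) => [|B [j [C [_ [_ ->]]]]]; last first.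
  have [Ccj|nCcj] := pselect (C (c j)).
    by right; apply/seteqP; split => // w _ /=; rewrite Xc.
  by left; apply/seteqP; split => // w /=; rewrite Xc.
split => [|B [->|->]|F F_triv]; first by left.
- by right; rewrite setD0.
- by left; rewrite setDv.
have [[i Fi]|nF] := pselect (exists i, F i = setT).
  by right; apply/seteqP; split => // w _; exists i => //; rewrite Fi.
left; apply/seteqP; split => // w [i _ Fiw].
by case: (F_triv i) => Fi; [rewrite Fi in Fiw | exfalso; apply: nF; exists i].
Qed.

Lemma measurable_linpred {R : realType} {d} {T : measurableType d} {p : nat}
  (b : 'rV[R]_p) (X : 'I_p -> T -> R) :
  (forall j, measurable_fun setT (X j)) -> measurable_fun setT (linpred b X).
Proof. by move=> mX; apply: measurable_sum => j; exact: measurable_funM. Qed.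

(* The upper bound for one law in U: writing e = y - bs^T x, the square loss
   of b is bounded through sq_loss_pointwise, where the cross terms over the
   support vanish by orthogonality and the remaining moments are <= sigma^2. *)
Section risk_upper_bound.
Context d (T : measurableType d) (R : realType) (P : probability T R) (p : nat).
Variables (bs b : 'rV[R]_p) (sigma2 : R) (X : 'I_p -> T -> R) (Y : T -> R).
Hypothesis inU : in_U bs sigma2 P X Y.

Let e w := Y w - linpred bs X w.

Let mX j : measurable_fun setT (X j). Proof. by case: inU => -[]. Qed.

Let me : measurable_fun setT e.
Proof. by case: inU => -[_ mY] *; apply: measurable_funB => //; exact: measurable_linpred. Qed.

Let e2_le : (\int[P]_w (e w ^+ 2)%:E <= sigma2%:E)%E.
Proof.
case: inU => _ _ _ /(_ setT (sigma_xS_setT (supp bs) X)).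
by rewrite probability_setT mule1.
Qed.

Let X2_le j : (\int[P]_w (X j w ^+ 2)%:E <= sigma2%:E)%E.
Proof. by case: inU. Qed.

Let ie2 : P.-integrable setT (fun w => (e w ^+ 2)%:E).
Proof. by apply: integrable_sq => //; apply: le_lt_trans e2_le _; exact: ltry. Qed.

Let iX2 j : P.-integrable setT (fun w => (X j w ^+ 2)%:E).
Proof. by apply: integrable_sq => //; apply: le_lt_trans (X2_le j) _; exact: ltry. Qed.

Let ieX j : P.-integrable setT (fun w => (e w * X j w)%:E).
Proof. exact: integrable_mul_of_sq. Qed.

Lemma resid_orthogonal j : bs 0 j != 0 -> (\int[P]_w (e w * X j w)%:E = 0)%E.
Proof.
move=> bsj; case: inU => _ _ e_orth _ _.
apply: integral_mul_eq0 => //; first exact: integrable_of_sq.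
by move=> B mB; apply: e_orth; apply: sub_gen_smallest; exists j, B.
Qed.

(* The dominating function of sq_loss_pointwise, evaluated at (e, x). *)
Let H w := e w ^+ 2 + \sum_(j < p) (off_weight b bs j * (e w ^+ 2 + X j w ^+ 2)
                                   + p%:R * (b 0 j - bs 0 j) ^+ 2 * X j w ^+ 2).

Let HE w : (H w)%:E = ((e w ^+ 2)%:E + \sum_(j < p)
    ((off_weight b bs j)%:E * ((e w ^+ 2)%:E + (X j w ^+ 2)%:E)
     + (p%:R * (b 0 j - bs 0 j) ^+ 2)%:E * (X j w ^+ 2)%:E))%E.
Proof. by rewrite EFinD -sumEFin; under eq_bigr do rewrite EFinD !EFinM EFinD. Qed.

Let iHj j : P.-integrable setT (fun w =>
    ((off_weight b bs j)%:E * ((e w ^+ 2)%:E + (X j w ^+ 2)%:E)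
     + (p%:R * (b 0 j - bs 0 j) ^+ 2)%:E * (X j w ^+ 2)%:E)%E).
Proof. by apply: integrableD => //; apply: integrableZl => //; exact: integrableD. Qed.

Let iH : P.-integrable setT (fun w => (H w)%:E).
Proof.
under eq_fun do rewrite HE.
by apply: integrableD => //; exact: integrable_sum.
Qed.

Let integral_dominating_le : (\int[P]_w (H w)%:E <=
  (sigma2 + \sum_(j < p) (off_weight b bs j * (sigma2 + sigma2)
                          + p%:R * (b 0 j - bs 0 j) ^+ 2 * sigma2))%:E)%E.
Proof.
under eq_integral do rewrite HE.
rewrite integralD //; last exact: integrable_sum.
rewrite integral_sum // EFinD -sumEFin; apply: leeD => //; apply: lee_sum => j _.
rewrite integralD //; last 2 first.
- by apply: integrableZl => //; exact: integrableD.
- exact: integrableZl.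
rewrite !integralZl //; last exact: integrableD.
rewrite integralD // EFinD (EFinM (off_weight b bs j)) (EFinM _ sigma2) EFinD.
apply: leeD; apply: lee_wpmul2l => //.
- by rewrite lee_fin off_weight_ge0.
- exact: leeD.
- by rewrite lee_fin mulr_ge0 ?sqr_ge0.
Qed.

(* The mean-zero cross terms of sq_loss_pointwise. *)
Let C w := \sum_(j < p | bs 0 j != 0) 2 * (b 0 j - bs 0 j) * (e w * X j w).

Let iC : P.-integrable setT (fun w => (C w)%:E).
Proof.
under eq_fun do rewrite /C -sumEFin; apply: integrable_sum => // j _.
by under eq_fun do rewrite EFinM; apply: integrableZl => //; exact: ieX.
Qed.

Let integral_C : (\int[P]_w (C w)%:E = 0)%E.
Proof.
under eq_integral do rewrite /C -sumEFin; rewrite integral_sum //.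
- apply: big1 => j bsj; under eq_integral do rewrite EFinM.
  by rewrite integralZl // resid_orthogonal ?mule0.
- by move=> j; under eq_fun do rewrite EFinM; apply: integrableZl => //; exact: ieX.
Qed.

(* Integrating sq_loss_pointwise: the cross terms integrate to 0. *)
Lemma risk_upper_bound_law :
  (\int[P]_w ((Y w - linpred b X w) ^+ 2)%:E <=
   (sigma2 + \sum_(j < p) (off_weight b bs j * (sigma2 + sigma2)
                          + p%:R * (b 0 j - bs 0 j) ^+ 2 * sigma2))%:E)%E.
Proof.
pose L w := (Y w - linpred b X w) ^+ 2.
have LC_le_H w : L w + C w <= H w.
  rewrite /L /C /H.
  have -> : Y w - linpred b X w = e w - \sum_(j < p) (b 0 j - bs 0 j) * X j w.
    rewrite /e /linpred -addrA -opprD -big_split /=; congr (_ - _).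
    by apply: eq_bigr => j _; ring.
  exact: sq_loss_pointwise.
have iL : P.-integrable setT (fun w => (L w)%:E).
  have iHC := integrableB measurableT iH iC.
  apply: le_integrable iHC => //.
    apply/measurable_EFinP/measurable_funX/measurable_funB.
      by case: inU => -[].
    exact: measurable_linpred.
  move=> w _ /=; rewrite lee_fin ger0_norm ?sqr_ge0 //.
  by apply: le_trans (ler_norm _); rewrite lerBrDr LC_le_H.
rewrite -[X in (X <= _)%E]adde0 -integral_C -integralD //.
apply: le_trans integral_dominating_le.
apply: le_integral => // [|w _]; first exact: integrableD.
by rewrite -EFinD lee_fin LC_le_H.
Qed.

End risk_upper_bound.

Lemma risk_upper_bound {R : realType} {p : nat} (bs b : 'rV[R]_p) (sigma2 : R) :
  0 < sigma2 -> (R_oos b bs sigma2 <= (sigma2 + sigma2 * p%:R ^+ 2 * sqnorm (b - bs)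
                   + 2 * sigma2 * p%:R * off_support_norm b bs)%:E)%E.
Proof.
move=> sigma2_gt0; apply: ge_ereal_sup => _ [d [T [P [X [Y [inU ->]]]]]].
apply: le_trans (@risk_upper_bound_law _ _ _ _ _ _ b _ _ _ inU) _.
rewrite lee_fin big_split /=.
have off_le : \sum_(j < p) off_weight b bs j * (sigma2 + sigma2)
    <= 2 * sigma2 * p%:R * off_support_norm b bs.
  rewrite -mulr_suml; have := sum_off_weight_le b bs; nra.
have quad_le : \sum_(j < p) p%:R * (b 0 j - bs 0 j) ^+ 2 * sigma2
    <= sigma2 * p%:R ^+ 2 * sqnorm (b - bs).
  have -> : \sum_(j < p) p%:R * (b 0 j - bs 0 j) ^+ 2 * sigma2
      = sigma2 * p%:R * sqnorm (b - bs).
    by rewrite /sqnorm mulr_sumr; apply: eq_bigr => j _; rewrite !mxE; ring.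
  have p_le_sqr : p%:R <= p%:R ^+ 2 :> R.
    by clear; case: p => [|n]; rewrite ?expr0n // ler_eXnr ?ler1n.
  have := mulr_ge0 (ltW sigma2_gt0) (sqnorm_ge0 (b - bs)); nra.
lra.
Qed.

Lemma integral_bernoulli_real (R : realType) (q : R) (f : bool -> R) :
  0 <= q <= 1 ->
  (\int[bernoulli_prob q]_y (f y)%:E = (q * f true + (1 - q) * f false)%:E)%E.
Proof.
move=> q01; pose c : R := `|f true| + `|f false|.
have c_ge w : `|f w| <= c by case: w; rewrite /c ?lerDl ?lerDr.
have int_bool (g : bool -> R) M : (forall w, `|g w| <= M) ->
    (bernoulli_prob q).-integrable setT (EFin \o g).
  move=> gM; apply: le_integrable (finite_measure_integrable_cst _ M measurableT) => //.
  by move=> w _ /=; rewrite lee_fin (le_trans (gM w)) ?ler_norm.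
have shift_ge0 w : 0 <= f w + c.
  by have := c_ge w; rewrite ler_norml => /andP[+ _]; lra.
rewrite (_ : (fun y => (f y)%:E) = (fun y => (f y + c)%:E - (cst c y)%:E)%E); last first.
  by apply/funext => y; rewrite -EFinB addrK.
rewrite integralB_EFin //; last 2 first.
- apply: (int_bool _ (c + c)) => w.
  by rewrite ger0_norm ?shift_ge0 // lerD2r (le_trans (ler_norm _)).
- by apply: (int_bool _ c) => w; rewrite /= ger0_norm ?normr_ge0 ?addr_ge0.
have c_ge0 : 0 <= c by rewrite addr_ge0.
rewrite !integral_bernoulli_prob //; try by move=> w; rewrite lee_fin.
by rewrite -!EFinM -!EFinD /unstable.onem /=; congr EFin; ring.
Qed.

(* The extremal law for the lower bound: x is the deterministic vector with
   x_j = sigma sign(b_j - bs_j), and y = bs^T x + sigma eps for a fair sign eps. *)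
Section two_point_law.
Variables (R : realType) (p : nat) (bs b : 'rV[R]_p) (sigma2 : R).
Hypothesis sigma2_gt0 : 0 < sigma2.

Let s := Num.sqrt sigma2.
Let sqr_s : s ^+ 2 = sigma2. Proof. by rewrite sqr_sqrtr // ltW. Qed.

Let X (j : 'I_p) (w : bool) : R := s * Num.sg (b 0 j - bs 0 j).
Let Y (w : bool) : R := linpred bs X w + (if w then s else - s).
Let P := @bernoulli_prob R 2^-1.
Let half01 : 0 <= (2^-1 : R) <= 1. Proof. by apply/andP; split; lra. Qed.

Let resid w : Y w - linpred bs X w = if w then s else - s.
Proof. by rewrite /Y addrC addKr. Qed.

Lemma two_point_in_U : in_U bs sigma2 P X Y.
Proof.
split => //.
- pose M := `|Y true| + `|Y false|.
  apply: le_integrable (finite_measure_integrable_cst P M measurableT) => //.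
  move=> w _ /=; rewrite lee_fin [X in _ <= X]ger0_norm ?addr_ge0 //.
  by case: w; rewrite ?lerDl ?lerDr.
- move=> A /(sigma_xS_cst (fun j w => erefl)) [->|->]; first by rewrite integral_set0.
  under eq_integral do rewrite resid.
  by rewrite integral_bernoulli_real //; congr EFin; lra.
- have resid2 w : (Y w - linpred bs X w) ^+ 2 = sigma2.
    by rewrite resid; case: w; rewrite ?sqrrN sqr_s.
  by move=> A _; under eq_integral do rewrite resid2; rewrite integral_cst.
- move=> j; rewrite integral_bernoulli_real // lee_fin /X exprMn sqr_s sqr_sg.
  case: (_ != 0); rewrite /= ?mulr1 ?mulr0 ?addr0; last exact: ltW.
  by rewrite -mulrDl addrC subrK mul1r.
Qed.

Let two_point_risk : (\int[P]_w ((Y w - linpred b X w) ^+ 2)%:E =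
  (sigma2 + (s * \sum_(j < p) `|b 0 j - bs 0 j|) ^+ 2)%:E)%E.
Proof.
have shift : linpred b X true = linpred bs X true + s * \sum_(j < p) `|b 0 j - bs 0 j|.
  rewrite /linpred mulr_sumr -big_split /=; apply: eq_bigr => j _.
  by rewrite /X normrEsg; ring.
rewrite integral_bernoulli_real //; congr EFin.
rewrite /Y -[linpred b X false]/(linpred b X true).
by rewrite -[linpred bs X false]/(linpred bs X true) shift -sqr_s; field.
Qed.

Lemma risk_lower_bound :
  ((sigma2 + sigma2 * sqnorm (b - bs))%:E <= R_oos b bs sigma2)%E.
Proof.
have risk_le : (\int[P]_w ((Y w - linpred b X w) ^+ 2)%:E <= R_oos b bs sigma2)%E.
  by apply: ereal_sup_ubound; exists _, _, P, X, Y; split => //; exact: two_point_in_U.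
apply: le_trans risk_le; rewrite two_point_risk lee_fin lerD2l exprMn sqr_s.
apply: ler_wpM2l; first exact: ltW.
have -> : sqnorm (b - bs) = \sum_(j < p) `|b 0 j - bs 0 j| ^+ 2.
  by apply: eq_bigr => j _; rewrite !mxE real_normK ?num_real.
exact: sum_sqr_le_sqr_sum.
Qed.

End two_point_law.

Theorem proposition1 (R : realType) (p : nat) (hp : (1 <= p)%N)
  (bs : 'rV[R]_p) (sigma2 : R) (hs : 0 < sigma2) :
  R_oos bs bs sigma2 = sigma2%:E /\
  forall b : 'rV[R]_p,
    ((sigma2 * sqnorm (b - bs))%:E <= R_oos b bs sigma2 - R_oos bs bs sigma2)%E /\
    (R_oos b bs sigma2 - R_oos bs bs sigma2 <=
       (sigma2 * (p%:R ^+ 2) * sqnorm (b - bs)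
        + 2 * sigma2 * p%:R * off_support_norm b bs)%:E)%E.
Proof.
have risk_bs : R_oos bs bs sigma2 = sigma2%:E.
  apply/eqP; rewrite eq_le; apply/andP; split.
    have := risk_upper_bound bs bs hs.
    by rewrite sqnorm_subrr off_support_norm_self !mulr0 !addr0.
  by have := risk_lower_bound bs bs hs; rewrite sqnorm_subrr mulr0 addr0.
split => // b; rewrite risk_bs; split.
  by rewrite leeBrDr // -EFinD addrC risk_lower_bound.
rewrite leeBlDr // -EFinD addrC addrA; exact: risk_upper_bound.
Qed.
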